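(* Let $g_1,g_2$ be monic divisors of $x^m-1$ over $\mathbb{F}_q$, $v_1\in\mathcal{R}$, and let $\mathcal{D}_1$ be the QC code of length $2m$ generated by $(g_1,v_1g_1)$ and $(0,g_2)$. Then $\mathcal{D}_1$ is Euclidean dual-containing iff $g_1\mid g_1^{\perp}$, $g_1\mid g_2^{\perp}\overline{v_1}$ and $g_2\mid g_2^{\perp}(1+\overline{v_1}v_1)$.
   Context: $\mathcal{R}=\mathbb{F}_q[x]/(x^m-1)$, elements identified with representatives of degree $<m$; $[k]=(k_0,\dots,k_{m-1})$; $\overline{k}(x)=k(x^{-1})\bmod(x^m-1)$; $f^*(x)=x^{\deg f}f(1/x)$; for $k\in\mathcal{R}$, $f=\frac{x^m-1}{\gcd(k,x^m-1)}$ and $k^{\perp}=f(0)^{-1}f^*$. For $g\mid x^m-1$, ''$g\mid a$'' means $g$ divides the representative of $a\in\mathcal{R}$. The QC code generated by $(u_{i1},u_{i2})$, $i=1,2$, is $\{([r_1u_{11}+r_2u_{21}],[r_1u_{12}+r_2u_{22}]):r_i\in\mathcal{R}\}$. Euclidean dual-containing: $\mathcal{D}_1^{\perp_E}\subseteq\mathcal{D}_1$ with $\langle u,v\rangle_E=\sum u_iv_i$. *)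

From HB Require Import structures.
From mathcomp Require Import all_boot all_order all_algebra.
Set Implicit Arguments. Unset Strict Implicit. Unset Printing Implicit Defensive.
Import GRing.Theory.
Local Open Scope ring_scope.

(* R = F[x]/(x^m - 1); elements of R are represented by polynomials of
   size <= m (degree < m).  A general polynomial is mapped to R by [qc_red]. *)
Section QC.
Variables (F : fieldType) (m : nat).

Definition qc_xm1 : {poly F} := 'X^m - 1.

Definition qc_red (p : {poly F}) : {poly F} := p %% qc_xm1.

Definition qc_vec (k : {poly F}) : 'rV[F]_m := \row_(i < m) (qc_red k)`_i.

(* kbar(x) = k(x^{-1}) mod (x^m - 1) : coefficient i is k_{(-i) mod m} *)
Definition qc_bar (k : {poly F}) : {poly F} :=
  \poly_(i < m) (qc_red k)`_((m - i) %% m).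

(* f^*(x) = x^{deg f} f(1/x) *)
Definition recip (f : {poly F}) : {poly F} :=
  \poly_(i < size f) f`_((size f).-1 - i).

Definition qc_perp (k : {poly F}) : {poly F} :=
  let f := qc_xm1 %/ gcdp (qc_red k) qc_xm1 in
  qc_red ((f`_0)^-1 *: recip f).

Definition qc_dvd (g a : {poly F}) : bool := g %| qc_red a.

Definition D1 (g1 g2 v1 : {poly F}) : 'rV[F]_(m + m) -> Prop :=
  fun c => exists r1 r2 : {poly F},
    (size r1 <= m)%N /\ (size r2 <= m)%N /\
    c = row_mx (qc_vec (r1 * g1)) (qc_vec (r1 * (v1 * g1) + r2 * g2)).

Definition eucl (n : nat) (u v : 'rV[F]_n) : F := \sum_(i < n) u 0 i * v 0 i.

Definition dual_containing (n : nat) (C : 'rV[F]_n -> Prop) : Prop :=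
  forall u : 'rV[F]_n, (forall c, C c -> eucl u c = 0) -> C u.
End QC.

From HB Require Import structures.
From mathcomp Require Import all_boot all_order all_algebra.
From mathcomp Require Import zify ring.
Import GRing.Theory.

(* In R = F[x]/(x^m - 1) the map bar is a ring involution, computed as
   k(x^(m-1)) since x^(m-1) is the inverse of x, and the Euclidean product of
   [a] and [b] is the constant coefficient of a * bar b.  Hence ([a1], [a2]) is
   orthogonal to D1 iff (a1 + a2 bar v1) bar g1 = 0 and a2 bar g2 = 0 in R,
   whereas it lies in D1 iff g1 | a1 and g2 | a2 - v1 a1.  For g | x^m - 1 the
   annihilator of bar g is the ideal generated by g^perp, and g | y iff
   y bar(g^perp) = 0; solving the two orthogonality equations with these facts
   turns dual-containment into the three divisibilities. *)

Lemma modn_addn_mulpred_eq0 m i j : (i < m)%N -> (j < m)%N ->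
  ((i + j * m.-1) %% m == 0)%N = (j == i).
Proof.
case: m => // n /= hi hj; rewrite -(mod0n n.+1) -(eqn_modDr j) add0n.
have -> : (i + j * n + j = j * n.+1 + i)%N by rewrite mulnS; lia.
by rewrite modnMDl !modn_small // eq_sym.
Qed.

Lemma eqn_modn_mulpred m i j : (i < m)%N -> (j < m)%N ->
  (i == (j * m.-1) %% m)%N = (j == (m - i) %% m).
Proof.
case: m => // n /= hi hj.
have -> : (i == (j * n) %% n.+1) = (i + j == j * n + j %[mod n.+1])%N.
  by rewrite eqn_modDr (@modn_small i).
have -> : (j * n + j = j * n.+1)%N by rewrite mulnS; lia.
rewrite modnMl; case: i hi => [|i] hi; first by rewrite add0n subn0 modnn modn_small.
rewrite (@modn_small (n.+1 - i.+1)); last lia.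
case: (ltnP (i.+1 + j) n.+1) => h; first by rewrite modn_small //; apply/idP/idP; lia.
have -> : (i.+1 + j = (i.+1 + j - n.+1) + n.+1)%N by lia.
by rewrite modnDr modn_small; [apply/eqP/eqP; lia | lia].
Qed.

Lemma modn_sqr_pred m : (0 < m)%N -> (m.-1 * m.-1 = 1 %[mod m])%N.
Proof.
case: m => [|[|k]] // _ /=.
have -> : (k.+1 * k.+1 = k * k.+2 + 1)%N by nia.
by rewrite modnMDl.
Qed.

Lemma modn_addn_mulpred m k j : (0 < m)%N -> (j <= k)%N ->
  (k + j * m.-1 = k - j %[mod m])%N.
Proof.
case: m => // n _ /= h.
have -> : (k + j * n = j * n.+1 + (k - j))%N by rewrite mulnS; lia.
by rewrite modnMDl.
Qed.

Local Open Scope ring_scope.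

Lemma dvdp_comp_polyBr (R : idomainType) (d p q q' : {poly R}) :
  d %| q - q' -> d %| (p \Po q) - (p \Po q').
Proof.
move=> dq; rewrite !comp_polyE -sumrB.
apply: (big_ind (fun x => d %| x)) => [|x y|i _]; [exact: dvdp0 | exact: dvdp_add |].
rewrite -scalerBr -mul_polyC; apply: dvdp_mull.
by rewrite subrXX (dvdp_trans dq) ?dvdp_mulIl.
Qed.

Lemma eucl_row_mx (F : fieldType) n1 n2 (u1 w1 : 'rV[F]_n1) (u2 w2 : 'rV[F]_n2) :
  eucl (row_mx u1 u2) (row_mx w1 w2) = eucl u1 w1 + eucl u2 w2.
Proof.
rewrite /eucl big_split_ord /=; congr (_ + _); apply: eq_bigr => i _;
  by rewrite ?row_mxEl ?row_mxEr.
Qed.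

Section QuotientRing.
Variables (F : fieldType) (m : nat).
Hypothesis m_gt0 : (0 < m)%N.
Implicit Types p q : {poly F}.

Local Notation M := (qc_xm1 F m).
Local Notation red := (@qc_red F m).

Lemma size_qc_xm1 : size M = m.+1.
Proof. by rewrite /qc_xm1 -(size_XnsubC (1:F) m_gt0) polyC1. Qed.

Lemma qc_xm1_neq0 : M != 0.
Proof. by rewrite -size_poly_eq0 size_qc_xm1. Qed.

Lemma size_red p : (size (red p) <= m)%N.
Proof. by rewrite -ltnS -size_qc_xm1 /qc_red ltn_modp qc_xm1_neq0. Qed.

Lemma red_small p : (size p <= m)%N -> red p = p.
Proof. by move=> h; rewrite /qc_red modp_small // size_qc_xm1 ltnS. Qed.

Lemma redK p : red (red p) = red p.
Proof. exact: modp_id. Qed.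

Lemma redD p q : red (p + q) = red p + red q.
Proof. exact: modpD. Qed.

Lemma redN p : red (- p) = - red p.
Proof. exact: modpN. Qed.

Lemma redB p q : red (p - q) = red p - red q.
Proof. by rewrite redD redN. Qed.

Lemma redZ c p : red (c *: p) = c *: red p.
Proof. exact: modpZl. Qed.

Lemma red0 : red 0 = 0.
Proof. exact: mod0p. Qed.

Lemma red_sum (I : Type) (r : seq I) (P : pred I) (E : I -> {poly F}) :
  red (\sum_(i <- r | P i) E i) = \sum_(i <- r | P i) red (E i).
Proof. exact: (big_morph red redD red0). Qed.

Lemma redMr p q : red (p * red q) = red (p * q).
Proof. exact: modp_mul. Qed.

Lemma redMl p q : red (red p * q) = red (p * q).
Proof. by rewrite mulrC redMr mulrC. Qed.

Lemma red_eq0 p : (red p == 0) = (M %| p).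
Proof.
apply/idP/idP => [/eqP h|h]; last by rewrite /qc_red modp_eq0.
by rewrite (divp_eq p M) -/(qc_red m p) h addr0 dvdp_mull.
Qed.

Lemma red_eqP p q : red p = red q <-> M %| p - q.
Proof. by rewrite -red_eq0 redB subr_eq0; split=> /eqP. Qed.

Lemma dvdp_red g p : g %| M -> (g %| red p) = (g %| p).
Proof. by move=> gM; rewrite /qc_red -dvdp_mod. Qed.

Lemma red_expand p : red p = \sum_(i < m) (red p)`_i *: 'X^i.
Proof.
rewrite -poly_def; apply/polyP => i; rewrite coef_poly.
by case: ltnP => // hi; rewrite nth_default // (leq_trans (size_red p) hi).
Qed.

Lemma dvdp_xm1_Xnm k : M %| 'X^(m * k) - 1.
Proof.
rewrite exprM; have := subrXX ('X^m : {poly F}) 1 k; rewrite expr1n => ->.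
exact: dvdp_mulIl.
Qed.

Lemma redXn n : red 'X^n = 'X^(n %% m).
Proof.
rewrite -[RHS]red_small ?size_polyXn ?ltn_pmod //; apply/red_eqP.
rewrite {1}(divn_eq n m) exprD mulnC -{2}(mul1r 'X^(n %% m)) -mulrBl.
exact/dvdp_mulr/dvdp_xm1_Xnm.
Qed.

Lemma qc_vec_eq p q : qc_vec m p = qc_vec m q <-> red p = red q.
Proof.
split=> [/rowP h | h]; last by rewrite /qc_vec h.
apply/polyP => i; case: (ltnP i m) => hi; first by have := h (Ordinal hi); rewrite !mxE.
by rewrite !nth_default // (leq_trans (size_red _) hi).
Qed.

Lemma row_mx_qc_vec (u : 'rV[F]_(m + m)) :
  exists a1 a2, u = row_mx (qc_vec m a1) (qc_vec m a2).
Proof.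
pose o := Ordinal m_gt0.
exists (\poly_(i < m) u 0 (lshift m (insubd o i))),
       (\poly_(i < m) u 0 (rshift m (insubd o i))).
rewrite -{1}[u]hsubmxK; congr row_mx; apply/rowP => i;
  by rewrite !mxE red_small ?size_poly // coef_poly ltn_ord valKd.
Qed.

Definition rbar p := red (p \Po 'X^(m.-1)).

Lemma dvdp_xm1_comp p : M %| p -> M %| p \Po 'X^(m.-1).
Proof.
move=> /(dvdp_comp_poly 'X^(m.-1)); apply: dvdp_trans.
rewrite /qc_xm1 comp_polyB comp_Xn_poly -polyC1 comp_polyC polyC1 -exprM mulnC.
exact: dvdp_xm1_Xnm.
Qed.

Lemma rbar_red p : rbar (red p) = rbar p.
Proof.
apply/red_eqP; rewrite -comp_polyB; apply: dvdp_xm1_comp.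
by rewrite -red_eq0 redB redK subrr.
Qed.

Lemma rbar_eq p q : red p = red q -> rbar p = rbar q.
Proof. by move=> h; rewrite -rbar_red h rbar_red. Qed.

Lemma rbar_eq0 p : M %| p -> rbar p = 0.
Proof. by rewrite -red_eq0 => /eqP h; rewrite -rbar_red h /rbar comp_poly0 red0. Qed.

Lemma rbarD p q : rbar (p + q) = rbar p + rbar q.
Proof. by rewrite /rbar comp_polyD redD. Qed.

Lemma rbarZ c p : rbar (c *: p) = c *: rbar p.
Proof. by rewrite /rbar comp_polyZ redZ. Qed.

Lemma rbar0 : rbar 0 = 0.
Proof. by rewrite /rbar comp_poly0 red0. Qed.

Lemma rbarM p q : rbar (p * q) = red (rbar p * rbar q).
Proof. by rewrite /rbar comp_polyM redMl redMr. Qed.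

Lemma red_mul_rbarM a p q : red (a * rbar (p * q)) = red (a * rbar p * rbar q).
Proof. by rewrite rbarM redMr mulrA. Qed.

Lemma rbarXn k : rbar 'X^k = 'X^((k * m.-1) %% m).
Proof. by rewrite /rbar comp_Xn_poly -exprM redXn mulnC. Qed.

Lemma red_Xn_mul_rbarXnK k p : red ('X^k * (rbar 'X^k * p)) = red p.
Proof.
rewrite mulrA -redMl rbarXn -exprD redXn modnDmr modn_addn_mulpred // subnn.
by rewrite mod0n expr0 mul1r.
Qed.

Lemma red_rbarXn_mul_eq0 k p : (red (rbar 'X^k * p) == 0) = (red p == 0).
Proof.
apply/eqP/eqP => h; last by rewrite -redMr h mulr0 red0.
by rewrite -(red_Xn_mul_rbarXnK k) -redMr h mulr0 red0.
Qed.

Lemma rbarK p : rbar (rbar p) = red p.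
Proof.
rewrite {2}/rbar rbar_red /rbar -comp_polyA comp_Xn_poly -exprM.
apply/red_eqP; rewrite -{2}(comp_polyXr p); apply: dvdp_comp_polyBr.
by apply/red_eqP; rewrite !redXn -{2}(expr1 'X) redXn modn_sqr_pred.
Qed.

Lemma rbar_eq0E p : (rbar p == 0) = (red p == 0).
Proof.
apply/eqP/eqP => h; first by rewrite -rbarK h rbar0.
by rewrite -rbar_red h rbar0.
Qed.

Lemma rbarE p : rbar p = \sum_(j < m) (red p)`_j *: 'X^((j * m.-1) %% m).
Proof.
rewrite -rbar_red {1}red_expand (big_morph rbar rbarD rbar0).
by apply: eq_bigr => j _; rewrite rbarZ rbarXn.
Qed.

Lemma qc_barE p : qc_bar m p = rbar p.
Proof.
apply/polyP => i; rewrite rbarE /qc_bar coef_poly coef_sum.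
under eq_bigr => j _ do rewrite coefZ coefXn.
case: (ltnP i m) => hi.
  under eq_bigr => j _ do rewrite eqn_modn_mulpred //.
  rewrite (bigD1 (Ordinal (ltn_pmod (m - i) m_gt0))) //= eqxx mulr1.
  rewrite big1 ?addr0 // => j; rewrite -val_eqE /= => /negbTE ->.
  by rewrite mulr0.
rewrite big1 // => j _; case: eqP => [ij|]; last by rewrite mulr0.
by move: (ltn_pmod (j * m.-1) m_gt0); rewrite -ij ltnNge hi.
Qed.

Lemma coef0_red_Xn_mul_rbar i p : (i < m)%N -> (red ('X^i * rbar p))`_0 = (red p)`_i.
Proof.
move=> hi; rewrite rbarE mulr_sumr red_sum coef_sum.
under eq_bigr => j _ do
  rewrite -scalerAr redZ coefZ -exprD redXn modnDmr coefXn eq_sym modn_addn_mulpred_eq0 //.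
rewrite (bigD1 (Ordinal hi)) //= eqxx mulr1 big1 ?addr0 // => j.
by rewrite -val_eqE /= => /negbTE ->; rewrite mulr0.
Qed.

Lemma eucl_qc_vec p q : eucl (qc_vec m p) (qc_vec m q) = (red (p * rbar q))`_0.
Proof.
rewrite -redMl [red p]red_expand mulr_suml red_sum coef_sum.
apply: eq_bigr => i _; rewrite !mxE.
by rewrite -scalerAl redZ coefZ coef0_red_Xn_mul_rbar.
Qed.

Lemma eucl_qc_vecXn p k : (k < m)%N -> eucl (qc_vec m p) (qc_vec m 'X^k) = (red p)`_k.
Proof.
move=> hk; rewrite /eucl (bigD1 (Ordinal hk)) //= big1 ?addr0 => [|j].
  by rewrite !mxE redXn modn_small // coefXn eqxx mulr1.
by rewrite -val_eqE !mxE redXn modn_small // coefXn eq_sym => /negbTE ->; rewrite mulr0.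
Qed.

Lemma red_recip p : red (recip p) = red ('X^((size p).-1) * rbar p).
Proof.
rewrite redMr /recip poly_def comp_polyE mulr_sumr !red_sum.
under [RHS]eq_bigr => j _ do rewrite -scalerAr -exprM -exprD redZ redXn.
under [LHS]eq_bigr => j _ do rewrite redZ redXn.
rewrite (reindex_inj rev_ord_inj) /=; apply: eq_bigr => -[j /= hj] _.
have -> : ((size p).-1 - (size p - j.+1) = j)%N by move: (size p) hj; lia.
have -> : (size p - j.+1 = (size p).-1 - j)%N by move: (size p) hj; lia.
by rewrite mulnC modn_addn_mulpred //; move: (size p) hj; lia.
Qed.

Lemma qc_perp_spec g : g %| M -> exists f G c k,
  [/\ G %= g, M = f * G, G != 0, c != 0 &
      red (qc_perp m g) = red (c *: ('X^k * rbar f))].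
Proof.
move=> gM; set G := gcdp (red g) M; set f := M %/ G.
have GM : M = f * G by rewrite divpK // dvdp_gcdr.
have G_neq0 : G != 0 by apply: contraNneq qc_xm1_neq0; rewrite GM => ->; rewrite mulr0.
have f0_neq0 : f`_0 != 0.
  have : M.[0] = f.[0] * G.[0] by rewrite {1}GM hornerM.
  rewrite /qc_xm1 !hornerE expr0n eqn0Ngt m_gt0 /= sub0r horner_coef0.
  by move=> h; apply/eqP => f0; move: h; rewrite f0 mul0r => /eqP; rewrite oppr_eq0 oner_eq0.
exists f, G, (f`_0)^-1, (size f).-1; split; rewrite ?invr_eq0 //.
  exact: eqp_trans (gcdp_modl g M) (dvdp_gcd_idl gM).
by rewrite /qc_perp -/G -/f redK !redZ red_recip.
Qed.

Lemma dvdp_red_perp g y : g %| M ->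
  (g %| red y) = (red (y * rbar (qc_perp m g)) == 0).
Proof.
move=> gM; have [f [G [c [k [Gg GM _ c_neq0 hperp]]]]] := qc_perp_spec _ gM.
have f_neq0 : f != 0 by apply: contraNneq qc_xm1_neq0; rewrite GM => ->; rewrite mul0r.
rewrite (rbar_eq _ _ hperp) rbarZ rbarM rbarK -scalerAr redZ scaler_eq0 (negbTE c_neq0).
rewrite /= !redMr mulrCA red_rbarXn_mul_eq0 red_eq0 GM mulrC.
by rewrite dvdp_mul2r // (eqp_dvdl _ Gg) dvdp_red.
Qed.

Lemma red_perp_mul_rbar g : g %| M -> red (qc_perp m g * rbar g) = 0.
Proof.
move=> gM; have [f [G [c [k [Gg GM _ _ hperp]]]]] := qc_perp_spec _ gM.
have fg : M %| f * g by rewrite GM dvdp_mul // (eqp_dvdl _ Gg).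
rewrite -redMl hperp redMl -scalerAl redZ -mulrA -redMr -rbarM (rbar_eq0 _ fg).
by rewrite mulr0 red0 scaler0.
Qed.

Lemma red_mul_rbar_eq0P g a : g %| M ->
  red (a * rbar g) = 0 <-> exists s, red a = red (s * qc_perp m g).
Proof.
move=> gM; split=> [h | [s hs]]; last first.
  by rewrite -redMl hs redMl -mulrA -redMr red_perp_mul_rbar // mulr0 red0.
have [f [G [c [k [Gg GM G_neq0 c_neq0 hperp]]]]] := qc_perp_spec _ gM.
have : rbar (a * rbar g) = 0 by apply/eqP; rewrite rbar_eq0E h.
rewrite rbarM rbarK redMr => /eqP; rewrite red_eq0 => ag.
have /divpK fw : f %| rbar a.
  rewrite -(dvdp_mul2r _ _ G_neq0) -GM (dvdp_trans ag) // dvdp_mul //.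
  by case/andP: Gg.
have rbar_f : rbar f = c^-1 *: red (rbar 'X^k * qc_perp m g).
  rewrite -redMr hperp redMr -scalerAr redZ mulrCA red_Xn_mul_rbarXnK redK.
  by rewrite scalerA mulVf // scale1r.
exists (c^-1 *: (rbar (rbar a %/ f) * rbar 'X^k)).
rewrite -rbarK -{1}fw rbarM rbar_f -scalerAr redZ redMr.
by rewrite -scalerAl redZ mulrA.
Qed.

Lemma dvdp_perp_rbar_sym g1 g2 v : g1 %| M -> g2 %| M ->
  (g1 %| red (qc_perp m g2 * rbar v)) = (g2 %| red (v * qc_perp m g1)).
Proof.
move=> g1M g2M; rewrite !dvdp_red_perp // -rbar_eq0E !rbarM !rbarK.
by rewrite redMl redMr mulrAC redMr mulrC [rbar _ * _]mulrC mulrA.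
Qed.

Section Code.
Variables g1 g2 v1 : {poly F}.
Hypotheses (g1_monic : g1 \is monic) (g2_monic : g2 \is monic).
Hypotheses (g1M : g1 %| M) (g2M : g2 %| M).

Local Notation D := (@D1 F m g1 g2 v1).

Lemma D1_row_mxP a1 a2 : D (row_mx (qc_vec m a1) (qc_vec m a2)) <->
  g1 %| red a1 /\ g2 %| red (a2 - v1 * a1).
Proof.
split=> [[r1 [r2 [_ [_ /eq_row_mx [/qc_vec_eq e1 /qc_vec_eq e2]]]]] | [d1 d2]].
  split; first by rewrite e1 dvdp_red // dvdp_mull.
  rewrite redB e2 -(redMr v1 a1) e1 redMr -redB.
  have -> : r1 * (v1 * g1) + r2 * g2 - v1 * (r1 * g1) = r2 * g2 by ring.
  by rewrite dvdp_red // dvdp_mull.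
have g1_neq0 := monic_neq0 g1_monic; have g2_neq0 := monic_neq0 g2_monic.
exists (red a1 %/ g1), (red (a2 - v1 * a1) %/ g2).
split; [|split]; rewrite ?size_divp // ?(leq_trans (leq_subr _ _)) ?size_red //.
congr row_mx; apply/qc_vec_eq; first by rewrite divpK // redK.
rewrite (divpK d2) mulrCA (divpK d1) [red (_ * _ + _)]redD redK redMr -redD.
by rewrite addrC subrK.
Qed.

Lemma eucl_D1 a1 a2 r1 r2 :
  eucl (row_mx (qc_vec m a1) (qc_vec m a2))
       (row_mx (qc_vec m (r1 * g1)) (qc_vec m (r1 * (v1 * g1) + r2 * g2))) =
  (red (rbar r1 * (a1 * rbar g1 + a2 * (rbar v1 * rbar g1))))`_0
  + (red (rbar r2 * (a2 * rbar g2)))`_0.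
Proof.
rewrite eucl_row_mx !eucl_qc_vec rbarD mulrDr redD !red_mul_rbarM -!coefD -!redD.
by congr (red _)`_0; ring.
Qed.

Lemma orthogonal_D1P a1 a2 :
  (forall c, D c -> eucl (row_mx (qc_vec m a1) (qc_vec m a2)) c = 0) <->
  red (a1 * rbar g1 + a2 * (rbar v1 * rbar g1)) = 0 /\ red (a2 * rbar g2) = 0.
Proof.
split=> [orth | [hP hQ] c [r1 [r2 [_ [_ ->]]]]]; last first.
  by rewrite eucl_D1 -redMr hP -(redMr (rbar r2)) hQ !mulr0 red0 coef0 addr0.
have codeword (r1 r2 : {poly F}) : (size r1 <= m)%N -> (size r2 <= m)%N ->
    D (row_mx (qc_vec m (r1 * g1)) (qc_vec m (r1 * (v1 * g1) + r2 * g2))).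
  by move=> r1m r2m; exists r1, r2.
have sizeX k : (k < m)%N -> (size ('X^k : {poly F}) <= m)%N by rewrite size_polyXn.
have size0 : (size (0%R : {poly F}) <= m)%N by rewrite size_poly0.
split; rewrite -red0; apply/qc_vec_eq/rowP => k; rewrite !mxE red0 coef0.
  have := orth _ (codeword _ _ (sizeX k (ltn_ord k)) size0).
  by rewrite eucl_D1 rbar0 mul0r red0 coef0 addr0 mulrC -eucl_qc_vec eucl_qc_vecXn.
have := orth _ (codeword _ _ size0 (sizeX k (ltn_ord k))).
by rewrite eucl_D1 rbar0 mul0r red0 coef0 add0r mulrC -eucl_qc_vec eucl_qc_vecXn.
Qed.

Lemma dual_containing_D1E : dual_containing D <->
  (forall a1 a2, red (a1 * rbar g1 + a2 * (rbar v1 * rbar g1)) = 0 ->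
     red (a2 * rbar g2) = 0 -> g1 %| red a1 /\ g2 %| red (a2 - v1 * a1)).
Proof.
split=> [dc a1 a2 hP hQ | H u orth]; first exact/D1_row_mxP/dc/orthogonal_D1P.
have [a1 [a2 def_u]] := row_mx_qc_vec u; rewrite def_u in orth *.
by have [hP hQ] := (orthogonal_D1P a1 a2).1 orth; apply/D1_row_mxP/H.
Qed.

Lemma dual_containing_D1P : dual_containing D <->
  [/\ g1 %| red (qc_perp m g1), g1 %| red (qc_perp m g2 * rbar v1)
    & g2 %| red (qc_perp m g2 * (1 + rbar v1 * v1))].
Proof.
rewrite dual_containing_D1E; set p1 := qc_perp m g1; set p2 := qc_perp m g2.
split=> [H | [c1 c2 c3] a1 a2 hP hQ].
  have [c1 _] : g1 %| red p1 /\ g2 %| red (0 - v1 * p1).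
    by apply: H; rewrite ?mul0r ?addr0 ?red0 ?red_perp_mul_rbar.
  have [c2 c3] : g1 %| red (- (p2 * rbar v1)) /\ g2 %| red (p2 - v1 * - (p2 * rbar v1)).
    apply: H; last exact: red_perp_mul_rbar.
    by rewrite (_ : _ + _ = 0) ?red0 //; ring.
  split=> //; first by rewrite redN dvdpNr in c2.
  by rewrite (_ : p2 * _ = p2 - v1 * - (p2 * rbar v1)) //; ring.
have g2v1p1 : g2 %| v1 * p1 by rewrite -dvdp_red // -dvdp_perp_rbar_sym.
have g1p1 : g1 %| p1 by rewrite -dvdp_red.
have g1p2v1 : g1 %| p2 * rbar v1 by rewrite -dvdp_red.
have g2p2v1 : g2 %| p2 * (1 + rbar v1 * v1) by rewrite -dvdp_red.
have [s hs] := (red_mul_rbar_eq0P _ _ g2M).1 hQ.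
have [t ht] : exists t, red (a1 + a2 * rbar v1) = red (t * p1).
  by apply/(red_mul_rbar_eq0P _ _ g1M); rewrite -hP; congr red; ring.
have ha1 : red a1 = red (t * p1 - s * (p2 * rbar v1)).
  by rewrite redB -ht mulrA -redMl -hs redMl redD addrK.
split; first by rewrite ha1 dvdp_red //; apply: dvdp_sub; apply: dvdp_mull.
have -> : red (a2 - v1 * a1) = red (s * (p2 * (1 + rbar v1 * v1)) - t * (v1 * p1)).
  by rewrite redB hs -(redMr v1) ha1 redMr -redB; congr red; ring.
by rewrite dvdp_red //; apply: dvdp_sub; apply: dvdp_mull.
Qed.

End Code.
End QuotientRing.

Theorem mainTheorem7 (F : finFieldType) (m : nat) (g1 g2 v1 : {poly F}) :
  (0 < m)%N ->
  g1 \is monic -> g2 \is monic ->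
  g1 %| qc_xm1 F m -> g2 %| qc_xm1 F m ->
  (size v1 <= m)%N ->
  dual_containing (@D1 F m g1 g2 v1) <->
  [/\ qc_dvd m g1 (qc_perp m g1),
      qc_dvd m g1 (qc_perp m g2 * qc_bar m v1)
    & qc_dvd m g2 (qc_perp m g2 * (1 + qc_bar m v1 * v1))].
Proof.
move=> m_gt0 g1_monic g2_monic g1M g2M _.
by rewrite /qc_dvd !(qc_barE _ _ m_gt0); apply: dual_containing_D1P.
Qed.
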